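(* For any language $L\subseteq\Sigma^+$: $L\in\mathtt{incl}$-$\mathtt{ESO}$-$\mathtt{HORN}$ if and only if $(\Sigma^+\setminus L)\in LinConj$.
   Context: Fix a finite alphabet $\Sigma$. A nonempty word $w=w_1\cdots w_n$ is represented by the structure $\langle w\rangle=([1,n];(Q_s)_{s\in\Sigma},\mathtt{min},\mathtt{max},\mathtt{suc},\mathtt{pred})$ with $Q_s(i)\iff w_i=s$, $\mathtt{min}(i)\iff i=1$, $\mathtt{max}(i)\iff i=n$, $\mathtt{suc}(i)=\min(i+1,n)$, $\mathtt{pred}(i)=\max(i-1,1)$. For an integer $a$, $x+a$ denotes $\mathtt{suc}^a(x)$ if $a\ge0$ and $\mathtt{pred}^{-a}(x)$ if $a<0$; $y-b=\mathtt{pred}^b(y)$. An inclusion Horn formula is $\Phi=\exists\mathbf{R}\forall x\forall y\,\psi(x,y)$, $\mathbf{R}$ a finite set of binary relation symbols, $\psi$ a conjunction of Horn clauses over the signature $\{(Q_s)_{s\in\Sigma},\mathtt{min},\mathtt{max},\mathtt{suc},\mathtt{pred}\}\cup\mathbf{R}\cup\{=,\le,<\}$ (with the usual order on $[1,n]$), each of the form $x\le y\wedge\delta_1\wedge\cdots\wedge\delta_r\to\delta_0$ with $\delta_0$ an atom $R(x,y)$ ($R\in\mathbf{R}$) or $\bot$, and each $\delta_i$ one of: $U(x+a)$, $\neg U(x+a)$, $U(y+a)$, $\neg U(y+a)$ for $U\in\{(Q_s)_{s\in\Sigma},\mathtt{min},\mathtt{max}\}$ and $a\in\mathbb Z$;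 $x=y$ or $x<y$; a conjunction $S(x+a,y-b)\wedge x+a\le y-b$ with $S\in\mathbf{R}$ and integers $a,b\ge0$. $\mathtt{incl}$-$\mathtt{ESO}$-$\mathtt{HORN}$ is the class of languages $\{w\in\Sigma^+:\langle w\rangle\models\Phi\}$ for such $\Phi$. A linear conjunctive grammar is $G=(\Sigma,N,P,S)$ with nonterminals $N$, start symbol $S\in N$ and a finite set $P$ of rules $A\to\alpha_1\&\cdots\&\alpha_k$ ($k\ge1$) with each $\alpha_i\in\Sigma^*\cup\Sigma^*N\Sigma^*$. The languages $(L(A))_{A\in N}$ are the least (componentwise for inclusion) solution of the system $L(A)=\bigcup_{(A\to\alpha_1\&\cdots\&\alpha_k)\in P}\bigcap_{i=1}^kL(\alpha_i)$, where $L(uBv)=u\,L(B)\,v$ and $L(u)=\{u\}$ for $u,v\in\Sigma^*$, $B\in N$. $L(G)=L(S)$, and $LinConj$ is the class of languages generated by linear conjunctive grammars. *)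

From Stdlib Require List.
From mathcomp Require Import all_boot all_algebra.
Set Implicit Arguments. Unset Strict Implicit. Unset Printing Implicit Defensive.

(* positions of <w> are the naturals 1..n with n = size w *)
Definition suc (n i : nat) : nat := minn i.+1 n.
Definition pred_pos (i : nat) : nat := maxn i.-1 1.

(* x + a, for a : int :  suc^a(x) if a >= 0, pred^(-a)(x) if a < 0 *)
Definition shift (n : nat) (i : nat) (a : int) : nat :=
  match a with
  | Posz k => iter k (suc n) i
  | Negz k => iter k.+1 pred_pos i
  end.

Definition shiftdown (i b : nat) : nat := iter b pred_pos i.

Inductive unary (Sigma : Type) := UQ (s : Sigma) | Umin | Umax.

Definition unary_sem (Sigma : finType) (w : seq Sigma) (U : unary Sigma) (i : nat) : bool :=
  match U with
  | UQ s => onth w i.-1 == Some s       (* w_i = s  (positions are 1-based) *)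
  | Umin => i == 1
  | Umax => i == size w
  end.

Inductive var := VX | VY.

Inductive hlit (Sigma R : Type) :=
  | LUn (positive : bool) (U : unary Sigma) (v : var) (a : int)
  | LEq
  | LLt
  | LRel (Sr : R) (a b : nat).             (* S(x+a, y-b) /\ x+a <= y-b *)

(* a Horn clause  x <= y /\ delta_1 /\ ... /\ delta_r -> delta_0,
   head = Some R for R(x,y), None for bottom *)
Record hclause (Sigma R : Type) := HClause {
  hc_head : option R;
  hc_body : seq (hlit Sigma R) }.

Section HornSem.
Variables (Sigma : finType) (R : Type).
Variable (w : seq Sigma).
Variable (I : R -> nat -> nat -> Prop).

Definition hlit_sem (x y : nat) (l : hlit Sigma R) : Prop :=
  let n := size w in
  match l with
  | LUn pos U v a =>
      let p := shift n (if v is VX then x else y) a in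
      if pos then unary_sem w U p else ~~ unary_sem w U p
  | LEq => x = y
  | LLt => x < y
  | LRel Sr a b => I Sr (shift n x (Posz a)) (shiftdown y b)
                  /\ shift n x (Posz a) <= shiftdown y b
  end.

Definition hclause_sem (c : hclause Sigma R) : Prop :=
  forall x y : nat, 1 <= x <= size w -> 1 <= y <= size w ->
    x <= y ->
    (forall l, List.In l (hc_body c) -> hlit_sem x y l) ->
    match hc_head c with
    | Some Sr => I Sr x y
    | None => False
    end.
End HornSem.

Definition horn_models (Sigma : finType) (R : Type)
    (phi : seq (hclause Sigma R)) (w : seq Sigma) : Prop :=
  exists I : R -> nat -> nat -> Prop,
    forall c, List.In c phi -> hclause_sem w I c.

Definition incl_ESO_HORN (Sigma : finType) (L : seq Sigma -> Prop) : Prop :=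
  exists (R : finType) (phi : seq (hclause Sigma R)),
    forall w, L w <-> (w <> [::] /\ horn_models phi w).

Inductive lconj (Sigma N : Type) :=
  | CTerm (u : seq Sigma)
  | CNT (u : seq Sigma) (B : N) (v : seq Sigma).

(* a rule  A -> alpha_1 & ... & alpha_k  with k >= 1:
   (A, alpha_1, [alpha_2; ...; alpha_k]) *)
Definition lrule (Sigma N : Type) : Type := (N * lconj Sigma N * seq (lconj Sigma N))%type.

(* least solution of the language equation system, as an inductive
   (least fixed point) definition: gen P A w  <->  w \in L(A) *)
Inductive gen (Sigma : Type) (N : Type) (P : seq (lrule Sigma N)) : N -> seq Sigma -> Prop :=
  | gen_rule (A : N) (c0 : lconj Sigma N) (cs : seq (lconj Sigma N)) (w : seq Sigma) :
      List.In (A, c0, cs) P ->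
      (forall u, List.In (CTerm N u) (c0 :: cs) -> w = u) ->
      (forall u B v, List.In (CNT u B v) (c0 :: cs) ->
         exists w', w = u ++ w' ++ v /\ gen P B w') ->
      gen P A w.

Definition LinConj (Sigma : finType) (L : seq Sigma -> Prop) : Prop :=
  exists (N : finType) (P : seq (lrule Sigma N)) (S : N),
    forall w, L w <-> gen P S w.

(* Both directions are compilations.

   From a linear conjunctive grammar (N, P, S) for the complement of L we build
   a Horn formula whose least model on w consists of the atoms A(x, y) with
   w_x..w_y in L(A), together with Len_k(x, x + k) for k bounded by the rules.
   A rule A -> a_1 & ... & a_m becomes the clauses whose bodies choose, for every
   conjunct u B v, either B(x + |u|, y - |v|) with the letters of u read from x
   and those of v read up to y, or, when B derives the empty word, the exact
   word uv.  The clause min(x) /\ max(y) /\ S(x, y) -> bottom then makes the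
   formula satisfiable on w exactly when w is not in L(S).

   Conversely, let c exceed every offset occurring in an inclusion Horn formula.
   Whether the non-relational literals of a clause hold at (x, y) only depends
   on the c letters on each side of x and of y, so a nonterminal records a
   relation together with the c letters left of x and right of y, and a factor
   is summarised by its key: itself when shorter than 2c, else its first and
   last c letters.  An atom S(x + a, y - b) of a body becomes the conjunct
   that strips a letters on the left and b on the right of the factor.  The
   resulting grammar derives exactly the least model; after adding clauses
   that spread a derived bottom to the whole word, its start symbol derives w
   exactly when the formula has no model on w. *)

From Stdlib Require Import ZArith Lia Classical ClassicalEpsilon.
From mathcomp Require Import all_boot ssralg ssrint zify.
Set Implicit Arguments. Unset Strict Implicit. Unset Printing Implicit Defensive.

(* ssrint rebinds the key %Z to int_scope; Stdlib's Z needs it back. *)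
Delimit Scope Z_scope with Z.

Section GenInduction.
Variables (Sigma N : Type) (P : seq (lrule Sigma N)) (Q : N -> seq Sigma -> Prop).
Hypothesis IH : forall A c0 cs w, List.In (A, c0, cs) P ->
  (forall u, List.In (CTerm N u) (c0 :: cs) -> w = u) ->
  (forall u B v, List.In (CNT u B v) (c0 :: cs) ->
     exists w', w = u ++ w' ++ v /\ gen P B w' /\ Q B w') ->
  Q A w.

(* The generated [gen_ind] has no induction hypothesis for the subderivations
   hidden under the existential of [gen_rule]. *)
Fixpoint gen_ind_nested A w (g : gen P A w) {struct g} : Q A w :=
  match g with
  | gen_rule A c0 cs w Hin Ht Hn =>
      IH Hin Ht (fun u B v Hi =>
        match Hn u B v Hi with
        | ex_intro w' (conj e g') => ex_intro _ w' (conj e (conj g' (gen_ind_nested g')))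
        end)
  end.
End GenInduction.

Definition conj_holds (Sigma N : Type) (Q : N -> seq Sigma -> Prop) (c : lconj Sigma N) z : Prop :=
  match c with
  | CTerm u => z = u
  | CNT u B v => exists m, z = u ++ m ++ v /\ Q B m
  end.

Lemma conj_holds_rule (Sigma N : Type) (Q : N -> seq Sigma -> Prop) c0 cs z :
  (forall u, List.In (CTerm N u) (c0 :: cs) -> z = u) ->
  (forall u B v, List.In (CNT u B v) (c0 :: cs) -> exists m, z = u ++ m ++ v /\ Q B m) ->
  forall c, List.In c (c0 :: cs) -> conj_holds Q c z.
Proof. by move=> Ht Hn [u|u B v] hc /=; [apply: Ht|apply: Hn]. Qed.

Lemma gen_rule_conj (Sigma N : Type) (P : seq (lrule Sigma N)) A c0 cs z :
  List.In (A, c0, cs) P -> (forall c, List.In c (c0 :: cs) -> conj_holds (gen P) c z) -> gen P A z.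
Proof. by move=> hr h; apply: (gen_rule hr) => [u|u B v] /h. Qed.

Section ListIn.
Variables T U : Type.

Lemma In_cat (a : T) s1 s2 : List.In a (s1 ++ s2) <-> List.In a s1 \/ List.In a s2.
Proof. by elim: s1 => [|b s1 IH] /=; [tauto|rewrite IH; tauto]. Qed.

Lemma In_map (f : T -> U) b s : List.In b (map f s) <-> exists a, List.In a s /\ b = f a.
Proof.
elim: s => [|a s IH] /=; first by split => // -[a []].
rewrite IH; split.
- by case=> [<-|[a' [? ->]]]; [exists a; auto|exists a'; auto].
- by case=> a' [[<-|?] ->]; [left|right; exists a'].
Qed.

Lemma In_pmap (f : T -> option U) b s :
  List.In b (pmap f s) <-> exists a, List.In a s /\ f a = Some b.
Proof.
elim: s => [|a s IH] /=; first by split => // -[a []].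
case e: (f a) => [b'|] /=; rewrite IH; split.
- by case=> [<-|[a' [? ?]]]; [exists a; auto|exists a'; auto].
- by case=> a' [[<-|?] ?]; [left; congruence|right; exists a'].
- by case=> a' [? ?]; exists a'; auto.
- by case=> a' [[<-|?] ?]; [congruence|exists a'].
Qed.

Lemma In_flatten (a : T) ss : List.In a (flatten ss) <-> exists s, List.In s ss /\ List.In a s.
Proof.
elim: ss => [|s ss IH] /=; first by split => // -[s []].
rewrite In_cat IH; split.
- by case=> [?|[s' [? ?]]]; [exists s|exists s']; auto.
- by case=> s' [[->|?] ?]; [left|right; exists s'].
Qed.

Lemma all_In (p : pred T) s : all p s <-> forall a, List.In a s -> p a.
Proof.
elim: s => [|a s IH] //=; split.
- by case/andP=> pa /IH ps b [<-|/ps].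
- by move=> h; rewrite h /=; [apply/IH => b hb; apply: h; right|left].
Qed.

Lemma In_zip_iota (u : seq T) m p :
  List.In p (zip (iota m (size u)) u) <-> m <= p.1 /\ onth u (p.1 - m) = Some p.2.
Proof.
elim: u m => [|a u IH] m /=; first by split => // -[_]; rewrite onth0n.
case: p IH => i s IH; rewrite IH /=.
have [->|ne] := eqVneq i m.
- rewrite subnn /=; split; first by case=> [[->]|[]]; [|lia].
  by case=> _ [->]; left.
- split.
  + case=> [[ei _]|[h1 h2]]; first by rewrite ei eqxx in ne.
    by split; [lia|rewrite (_ : i - m = (i - m.+1).+1) //; lia].
  + case=> h1 h2; right; split; first lia.
    by rewrite (_ : i - m = (i - m.+1).+1) // in h2; lia.
Qed.

Lemma leq_foldr_maxn (f : T -> nat) a s : List.In a s -> f a <= foldr maxn 0 (map f s).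
Proof. by elim: s => [|b s IH] //= [->|/IH]; lia. Qed.
End ListIn.

Lemma In_iota a m n : List.In a (iota m n) <-> m <= a < m + n.
Proof.
elim: n m => [|n IH] m /=; first by split => //; lia.
rewrite IH; split; first by case; lia.
by move=> h; have [->|?] := eqVneq a m; [left|right; lia].
Qed.

Lemma In_enum (T : finType) (a : T) : List.In a (enum T).
Proof.
have : a \in enum T by rewrite mem_enum.
by elim: (enum T) => [|b s IH] //=; rewrite inE => /orP [/eqP ->|/IH]; [left|right].
Qed.

Lemma cat_eq_l (T : Type) (s1 s2 s3 s4 : seq T) :
  size s1 = size s2 -> s1 ++ s3 = s2 ++ s4 -> s1 = s2 /\ s3 = s4.
Proof.
move=> hs e; split.
- by have := congr1 (take (size s1)) e; rewrite take_size_cat // hs take_size_cat.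
- by have := congr1 (drop (size s1)) e; rewrite drop_size_cat // hs drop_size_cat.
Qed.

Lemma cat_eq_r (T : Type) (s1 s2 s3 : seq T) : s1 ++ s3 = s2 ++ s3 -> s1 = s2.
Proof.
move=> e; have hs : size s1 = size s2 by move: (congr1 size e); rewrite !size_cat; lia.
by case: (cat_eq_l hs e).
Qed.

Section ConcatChoices.
Variable T : Type.

Fixpoint concat_choices (ls : seq (seq (seq T))) : seq (seq T) :=
  if ls is a :: ls' then
    flatten [seq [seq b ++ bs | bs <- concat_choices ls'] | b <- a]
  else [:: [::]].

Lemma concat_choices_sound (Q : T -> Prop) ls body :
  List.In body (concat_choices ls) -> (forall l, List.In l body -> Q l) ->
  forall a, List.In a ls -> exists b, List.In b a /\ forall l, List.In l b -> Q l.
Proof.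
elim: ls body => [|a0 ls IH] body //=.
move=> /In_flatten [s [/In_map [b [hb ->]] /In_map [bs [hbs ->]]]] hQ a [<-|ha].
- by exists b; split => // l hl; apply: hQ; apply/In_cat; left.
- by apply: (IH bs hbs) => // l hl; apply: hQ; apply/In_cat; right.
Qed.

Lemma concat_choices_complete (Q : T -> Prop) ls :
  (forall a, List.In a ls -> exists b, List.In b a /\ forall l, List.In l b -> Q l) ->
  exists body, List.In body (concat_choices ls) /\ forall l, List.In l body -> Q l.
Proof.
elim: ls => [|a0 ls IH] /= h; first by exists [::]; split; [left|].
have [b [hb hbQ]] := h a0 (or_introl erefl).
have [bs [hbs hbsQ]] := IH (fun a ha => h a (or_intror ha)).
exists (b ++ bs); split; last by move=> l /In_cat [] ?; [apply: hbQ|apply: hbsQ].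
apply/In_flatten; exists [seq b ++ bs | bs <- concat_choices ls].
by split; apply/In_map; [exists b|exists bs].
Qed.
End ConcatChoices.

Section Slices.
Variable T : Type.
Implicit Types w u v : seq T.

(* The factor w_x ... w_y of w, positions being 1-based. *)
Definition slice w x y := take (y.+1 - x) (drop x.-1 w).

Lemma onth_take w k i : onth (take k w) i = if i < k then onth w i else None.
Proof.
rewrite !onthE map_take; case: ifP => h; first by rewrite nth_take.
by rewrite nth_default // size_take size_map; case: ifP; lia.
Qed.

Lemma onth_drop w k i : onth (drop k w) i = onth w (k + i).
Proof. by rewrite !onthE map_drop nth_drop. Qed.

Lemma onth_slice w x y i : 1 <= x ->
  onth (slice w x y) i = if i < y.+1 - x then onth w (x.-1 + i) else None.
Proof. by move=> hx; rewrite /slice onth_take onth_drop. Qed.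

Lemma slice_onth w x y i : 1 <= x -> i < y.+1 - x -> onth (slice w x y) i = onth w (x.-1 + i).
Proof. by move=> hx hi; rewrite onth_slice // hi. Qed.

Lemma size_slice w x y : 1 <= x <= y.+1 -> y <= size w -> size (slice w x y) = y.+1 - x.
Proof. by move=> *; rewrite /slice size_take size_drop; case: ifP; lia. Qed.

Lemma slice_full w : slice w 1 (size w) = w.
Proof. by rewrite /slice subn1 /= drop0 take_size. Qed.

Lemma slice_cat w x m y : 1 <= x <= m.+1 -> m <= y ->
  slice w x y = slice w x m ++ slice w m.+1 y.
Proof.
move=> hxm hmy; rewrite /slice.
have -> : y.+1 - x = (m.+1 - x) + (y.+1 - m.+1) by lia.
by rewrite takeD drop_drop; have -> : m.+1 - x + x.-1 = m.+1.-1 by lia.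
Qed.

Lemma slice_eq w u x : 1 <= x ->
  (forall i, i < size u -> onth w (x.-1 + i) = onth u i) -> slice w x (x + size u).-1 = u.
Proof.
move=> hx h; apply: eq_from_onth => i; rewrite onth_slice //.
case: ifP => hi; first by apply: h; lia.
by rewrite onth_default //; lia.
Qed.

Lemma slice_cat3 w x x' y' y : 1 <= x <= x' -> x' <= y'.+1 -> y' <= y -> y <= size w ->
  slice w x y = slice w x x'.-1 ++ slice w x' y' ++ slice w y'.+1 y.
Proof.
move=> *; rewrite (@slice_cat w x x'.-1 y); [|lia|lia].
by rewrite (_ : x'.-1.+1 = x') ?(@slice_cat w x' y' y) //; lia.
Qed.
Lemma slice_split3 w u m v x y :
  1 <= x <= y -> y <= size w -> slice w x y = u ++ m ++ v -> 0 < size m ->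
  [/\ x + size u <= y - size v, size v < y, slice w x (x + size u).-1 = u,
      slice w (x + size u) (y - size v) = m & slice w (y - size v).+1 y = v].
Proof.
move=> hxy hyw e hm.
have hsz : size (slice w x y) = y.+1 - x by rewrite size_slice //; lia.
rewrite e !size_cat in hsz.
rewrite (@slice_cat3 w x (x + size u) (y - size v) y) in e; try lia.
have s1 : size (slice w x (x + size u).-1) = size u by rewrite size_slice; lia.
have s2 : size (slice w (x + size u) (y - size v)) = size m by rewrite size_slice; lia.
have [-> e'] := cat_eq_l s1 e; have [-> ->] := cat_eq_l s2 e'.
by split => //; lia.
Qed.

Lemma slice_take_drop w x y x' y' :
  1 <= x <= x' -> x' <= y' -> y' <= y -> y <= size w ->
  let z := slice w x y in z = take (x' - x) z ++ slice w x' y' ++ drop (size z - (y - y')) z.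
Proof.
move=> hx hxy hy hyw /=; rewrite (@slice_cat3 w x x' y' y) //; last lia.
have sA : size (slice w x x'.-1) = x' - x by rewrite size_slice; lia.
have sC : size (slice w y'.+1 y) = y - y' by rewrite size_slice; lia.
rewrite take_size_cat // catA size_cat sC addnK drop_size_cat ?size_cat //.
by rewrite -catA.
Qed.
End Slices.

Lemma iter_suc n k i : 1 <= i <= n -> iter k (suc n) i = minn (i + k) n.
Proof. by move=> h; elim: k => [|k IH] /=; rewrite ?IH /suc; lia. Qed.

Lemma iter_pred_pos k i : 1 <= i -> iter k pred_pos i = maxn (i - k) 1.
Proof. by move=> h; elim: k => [|k IH] /=; rewrite ?IH /pred_pos; lia. Qed.

Lemma shiftdownE y b : 1 <= y -> shiftdown y b = maxn (y - b) 1.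
Proof. exact: iter_pred_pos. Qed.

Lemma shift_opp n y j : 1 <= y -> shift n y (- j%:Z)%R = maxn (y - j) 1.
Proof. by case: j => [|j] h; [rewrite /= subn0; lia|exact: (iter_pred_pos j.+1 h)]. Qed.

Lemma shift_range n x a : 1 <= x <= n -> 1 <= shift n x a <= n.
Proof.
case: a => k h; first by rewrite /shift iter_suc; lia.
by rewrite /shift iter_pred_pos; lia.
Qed.

Lemma shiftdown_range n y b : 1 <= y <= n -> 1 <= shiftdown y b <= n.
Proof. by move=> h; rewrite shiftdownE; lia. Qed.

Section HornOfGrammar.
Variables (Sigma N : finType) (P : seq (lrule Sigma N)) (S : N) (eps : N -> bool).
Hypothesis epsP : forall B, eps B <-> gen P B [::].

Definition conj_len (c : lconj Sigma N) : nat :=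
  match c with CTerm u => size u | CNT u _ v => size u + size v end.
Definition rule_len (r : lrule Sigma N) : nat := foldr maxn 0 (map conj_len (r.1.2 :: r.2)).
Definition max_conj_len : nat := foldr maxn 0 (map rule_len P).

Lemma conj_len_max A c0 cs c :
  List.In (A, c0, cs) P -> List.In c (c0 :: cs) -> conj_len c <= max_conj_len.
Proof.
move=> hr hc; apply: leq_trans (leq_foldr_maxn rule_len hr).
exact: (leq_foldr_maxn conj_len hc).
Qed.

(* [inl A] is the language of [A]; [Len k] relates x to x + k. *)
Definition hrel : finType := (N + 'I_max_conj_len.+1)%type.
Definition Len k : hrel := inr (inord k).
Notation lit := (hlit Sigma hrel).

Definition letters_from_x (u : seq Sigma) : seq lit :=
  [seq LUn _ true (UQ p.2) VX (Posz p.1) | p <- zip (iota 0 (size u)) u].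
Definition letters_to_y (v : seq Sigma) : seq lit :=
  [seq LUn _ true (UQ p.2) VY (- ((size v).-1 - p.1)%:Z)%R | p <- zip (iota 0 (size v)) v].
(* Shifts saturate at the ends of the word; these guards make x + |u| and
   y - |v| genuine positions. *)
Definition not_max_from_x (u : seq Sigma) : seq lit :=
  [seq LUn _ false (Umax _) VX (Posz i) | i <- iota 0 (size u)].
Definition not_min_to_y (v : seq Sigma) : seq lit :=
  [seq LUn _ false (Umin _) VY (- j%:Z)%R | j <- iota 0 (size v)].

Definition word_lits (u : seq Sigma) : seq lit :=
  LRel _ (Len (size u).-1) 0 0 :: letters_from_x u.
Definition factor_lits u B v : seq lit :=
  LRel _ (inl B) (size u) (size v)
    :: not_max_from_x u ++ not_min_to_y v ++ letters_from_x u ++ letters_to_y v.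

(* A conjunct [u B v] holds on a nonempty factor either through a nonempty
   middle part, or because [B] derives the empty word. *)
Definition conj_bodies (c : lconj Sigma N) : seq (seq lit) :=
  match c with
  | CTerm u => if u is [::] then [::] else [:: word_lits u]
  | CNT u B v =>
      factor_lits u B v
        :: (if eps B && (size (u ++ v) != 0) then [:: word_lits (u ++ v)] else [::])
  end.

Definition len_clauses : seq (hclause Sigma hrel) :=
  HClause (Some (Len 0)) [:: LEq _ _]
  :: [seq HClause (Some (Len k.+1)) [:: LLt _ _; LRel _ (Len k) 1 0]
       | k <- iota 0 max_conj_len].

Definition rule_clauses (r : lrule Sigma N) : seq (hclause Sigma hrel) :=
  [seq HClause (Some (inl r.1.1)) b | b <- concat_choices (map conj_bodies (r.1.2 :: r.2))].

Definition start_clause : hclause Sigma hrel :=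
  HClause None
    [:: LUn _ true (Umin _) VX (Posz 0); LUn _ true (Umax _) VY (Posz 0); LRel _ (inl S) 0 0].

Definition horn_of_grammar : seq (hclause Sigma hrel) :=
  start_clause :: len_clauses ++ flatten (map rule_clauses P).

Variable w : seq Sigma.
Notation n := (size w).

Definition holds_all (I : hrel -> nat -> nat -> Prop) x y (b : seq lit) : Prop :=
  forall l, List.In l b -> hlit_sem w I x y l.

Lemma holds_all_cat I x y b1 b2 :
  holds_all I x y (b1 ++ b2) <-> holds_all I x y b1 /\ holds_all I x y b2.
Proof.
split; first by move=> h; split=> l hl; apply: h; apply/In_cat; [left|right].
by case=> h1 h2 l /In_cat [/h1|/h2].
Qed.

Lemma holds_all_cons I x y l b :
  holds_all I x y (l :: b) <-> hlit_sem w I x y l /\ holds_all I x y b.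
Proof.
split; first by move=> h; split=> [|l' hl']; apply: h; [left|right].
by case=> h1 h2 l' [<-|/h2].
Qed.

Definition slice_interp (r : hrel) x y : Prop :=
  match r with inl A => gen P A (slice w x y) | inr k => y = x + k end.

Lemma letters_from_xP I x y u : 1 <= x -> x + size u <= n.+1 ->
  holds_all I x y (letters_from_x u) <-> slice w x (x + size u).-1 = u.
Proof.
move=> hx hu; split => [hb|hs l].
- apply: slice_eq => // i hi.
  have [s hs] : exists s, onth u i = Some s.
    by move: hi; rewrite -onthTE; case: onth => // s; exists s.
  have hin : List.In (LUn _ true (UQ s) VX (Posz i)) (letters_from_x u).
    by apply/In_map; exists (i, s); split => //; apply/In_zip_iota; rewrite subn0.
  move: (hb _ hin); rewrite /hlit_sem /= iter_suc; last lia.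
  by rewrite hs (_ : (minn (x + i) n).-1 = x.-1 + i); [move/eqP|lia].
- case/In_map=> -[i s] [/In_zip_iota [_ /=]]; rewrite subn0 => hi ->.
  have hiu : i < size u by rewrite -onthTE hi.
  rewrite /hlit_sem /= iter_suc; last lia.
  rewrite -hs slice_onth in hi; [|lia|lia].
  by apply/eqP; rewrite -hi; congr onth; lia.
Qed.

Lemma letters_to_yP I x y v : 1 <= y <= n -> size v <= y ->
  holds_all I x y (letters_to_y v) <-> slice w (y.+1 - size v) y = v.
Proof.
move=> hy hv; split => [hb|hs l].
- have -> : y = (y.+1 - size v + size v).-1 by lia.
  have -> : (y.+1 - size v + size v).-1.+1 - size v = y.+1 - size v by lia.
  apply: slice_eq => [|j hj]; first lia.
  have [s hs] : exists s, onth v j = Some s.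
    by move: hj; rewrite -onthTE; case: onth => // s; exists s.
  have hin : List.In (LUn _ true (UQ s) VY (- ((size v).-1 - j)%:Z)%R) (letters_to_y v).
    by apply/In_map; exists (j, s); split => //; apply/In_zip_iota; rewrite subn0.
  move: (hb _ hin); rewrite /hlit_sem shift_opp; last lia.
  by rewrite hs /= (_ : (maxn _ 1).-1 = (y.+1 - size v).-1 + j); [move/eqP|lia].
- case/In_map=> -[j s] [/In_zip_iota [_ /=]]; rewrite subn0 => hj ->.
  have hjv : j < size v by rewrite -onthTE hj.
  rewrite /hlit_sem shift_opp; last lia.
  rewrite -hs slice_onth in hj; [|lia|lia].
  by rewrite /unary_sem; apply/eqP; rewrite -hj; congr onth; lia.
Qed.

Lemma not_max_from_xP I x y u : 1 <= x <= n ->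
  holds_all I x y (not_max_from_x u) <-> x + size u <= n.
Proof.
move=> hx; split => [hb|hu l /In_map [i [/In_iota hi ->]]].
- have [->|hu] := posnP (size u); first lia.
  have hin : List.In (LUn _ false (Umax _) VX (Posz (size u).-1)) (not_max_from_x u).
    by apply/In_map; exists (size u).-1; split => //; apply/In_iota; lia.
  by move: (hb _ hin); rewrite /hlit_sem /= iter_suc; lia.
- by rewrite /hlit_sem /= iter_suc; lia.
Qed.

Lemma not_min_to_yP I x y v : 1 <= y ->
  holds_all I x y (not_min_to_y v) <-> size v < y.
Proof.
move=> hy; split => [hb|hv l /In_map [j [/In_iota hj ->]]].
- have [->|hv] := posnP (size v); first lia.
  have hin : List.In (LUn _ false (Umin _) VY (- (size v).-1%:Z)%R) (not_min_to_y v).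
    by apply/In_map; exists (size v).-1; split => //; apply/In_iota; lia.
  by move: (hb _ hin); rewrite /hlit_sem shift_opp /=; lia.
- by rewrite /hlit_sem shift_opp /=; lia.
Qed.

Lemma relation_lit_holds (I : hrel -> nat -> nat -> Prop) x y r a b :
  1 <= x <= n -> 1 <= y -> x + a <= y - b -> x + a <= n -> y - b >= 1 -> I r (x + a) (y - b) ->
  hlit_sem w I x y (LRel _ r a b).
Proof.
move=> hx hy hab han hb hI; rewrite /hlit_sem /= iter_suc // shiftdownE //.
have -> : minn (x + a) n = x + a by lia.
by have -> : maxn (y - b) 1 = y - b by lia.
Qed.

Definition len_complete (I : hrel -> nat -> nat -> Prop) : Prop :=
  forall k x, k <= max_conj_len -> 1 <= x -> x + k <= n -> I (Len k) x (x + k).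

Lemma word_lits_holds I x y u : len_complete I -> 1 <= x <= y -> y <= n ->
  slice w x y = u -> (size u).-1 <= max_conj_len -> holds_all I x y (word_lits u).
Proof.
move=> hlen hxy hyn hs hK.
have hsz : size u = y.+1 - x by rewrite -hs size_slice //; lia.
move=> l [<-|hl].
- rewrite /hlit_sem /=; have -> : y = x + (size u).-1 by lia.
  by split; [apply: hlen|]; lia.
- by move: l hl; apply/letters_from_xP; [lia|lia|]; rewrite (_ : (x + size u).-1 = y) //; lia.
Qed.

Lemma word_lits_sound x y u : 1 <= x <= y -> y <= n -> 0 < size u ->
  (size u).-1 <= max_conj_len -> holds_all slice_interp x y (word_lits u) -> slice w x y = u.
Proof.
move=> hxy hyn hu hK hb.
have [hlen _] := hb _ (or_introl erefl); rewrite /= inordK in hlen; last lia.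
rewrite hlen (_ : x + _ = (x + size u).-1); last lia.
by apply/letters_from_xP; [lia|lia|] => l hl; apply: hb; right.
Qed.

Lemma factor_lits_holds I x y u m B v : 1 <= x <= y -> y <= n ->
  slice w x y = u ++ m ++ v -> 0 < size m -> I (inl B) (x + size u) (y - size v) ->
  holds_all I x y (factor_lits u B v).
Proof.
move=> hxy hyn hs hm hI.
have [hlt hv hsu _ hsv] := slice_split3 hxy hyn hs hm.
apply/holds_all_cons; split; first by apply: relation_lit_holds => //; lia.
apply/holds_all_cat; split; first by apply/not_max_from_xP; lia.
apply/holds_all_cat; split; first by apply/not_min_to_yP; lia.
apply/holds_all_cat; split; first by apply/letters_from_xP => //; lia.
by apply/letters_to_yP; [lia|lia|]; rewrite (_ : y.+1 - size v = (y - size v).+1) //; lia.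
Qed.

Lemma factor_lits_sound x y u B v : 1 <= x <= y -> y <= n ->
  holds_all slice_interp x y (factor_lits u B v) ->
  exists m, slice w x y = u ++ m ++ v /\ gen P B m.
Proof.
move=> hxy hyn /holds_all_cons [hrel] /holds_all_cat [/not_max_from_xP hu].
move=> /holds_all_cat [/not_min_to_yP hv] /holds_all_cat [/letters_from_xP hsu /letters_to_yP hsv].
have {}hu : x + size u <= n by apply: hu; lia.
have {}hv : size v < y by apply: hv; lia.
move: hrel; rewrite /hlit_sem /= iter_suc ?shiftdownE; try lia.
have -> : minn (x + size u) n = x + size u by lia.
have -> : maxn (y - size v) 1 = y - size v by lia.
move=> [hg hle]; exists (slice w (x + size u) (y - size v)); split => //.
rewrite (@slice_cat3 _ w x (x + size u) (y - size v) y) //; try lia.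
rewrite hsu; [|lia|lia]; rewrite (_ : (y - size v).+1 = y.+1 - size v); last lia.
by rewrite hsv; [|lia|lia].
Qed.

Lemma conj_bodies_complete I x y c : len_complete I -> 1 <= x <= y -> y <= n ->
  conj_len c <= max_conj_len ->
  conj_holds (fun B m => gen P B m /\ forall x y, 1 <= x <= y -> y <= n ->
                 slice w x y = m -> I (inl B) x y) c (slice w x y) ->
  exists b, List.In b (conj_bodies c) /\ holds_all I x y b.
Proof.
move=> hlen hxy hyn; have hsz : size (slice w x y) = y.+1 - x by rewrite size_slice; lia.
case: c => [u|u B v] /= hK.
- case: u hK => [|s u] hK hs; first by rewrite hs /= in hsz; lia.
  exists (word_lits (s :: u)); split; first by left.
  by apply: word_lits_holds => //; rewrite /= in hK *; lia.
- move=> [m [hs [hg hI]]].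
  have [m0|hm] := posnP (size m).
  + move/size0nil: m0 hs hg => -> hs /epsP ->.
    exists (word_lits (u ++ v)); split.
      by right; rewrite ifT; [left|move: hsz; rewrite hs !size_cat /=; lia].
    by apply: word_lits_holds => //; rewrite ?size_cat; lia.
  + exists (factor_lits u B v); split; first by left.
    have [hlt _ _ hmid _] := slice_split3 hxy hyn hs hm.
    by apply: factor_lits_holds hs hm _ => //; apply: hI => //; lia.
Qed.

Lemma conj_bodies_sound x y c b : 1 <= x <= y -> y <= n -> conj_len c <= max_conj_len ->
  List.In b (conj_bodies c) -> holds_all slice_interp x y b ->
  conj_holds (gen P) c (slice w x y).
Proof.
move=> hxy hyn; case: c => [[|s u]|u B v] //= hK.
- by case=> [<-|[]]; apply: word_lits_sound => //=; lia.
- case=> [<-|]; first exact: factor_lits_sound.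
  case: ifP => // /andP [/epsP hB hne] [<-|[]] hb; exists [::]; split => //.
  by apply: word_lits_sound hb; rewrite size_cat in hne *; lia.
Qed.

Definition horn_model (I : hrel -> nat -> nat -> Prop) : Prop :=
  forall cl, List.In cl horn_of_grammar -> hclause_sem w I cl.

Lemma horn_model_len I : horn_model I -> len_complete I.
Proof.
move=> HI; elim=> [|k IH] x hk hx hxn.
- have hin : List.In (HClause (Some (Len 0)) [:: LEq _ _]) horn_of_grammar.
    by right; apply/In_cat; left; left.
  by apply: (HI _ hin x (x + 0)); [lia|lia|lia|] => l [<-|[]] /=; lia.
- have hin :
    List.In (HClause (Some (Len k.+1)) [:: LLt _ _; LRel _ (Len k) 1 0]) horn_of_grammar.
    by right; apply/In_cat; left; right; apply/In_map; exists k; split => //; apply/In_iota; lia.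
  apply: (HI _ hin x (x + k.+1)); [lia|lia|lia|] => l [<-|[<-|[]]] /=; first lia.
  have -> : suc n x = x.+1 by rewrite /suc; lia.
  have -> : x + k.+1 = x.+1 + k by lia.
  by split; [apply: IH|]; lia.
Qed.

Lemma horn_model_gen I : horn_model I -> forall A z, gen P A z ->
  forall x y, 1 <= x <= y -> y <= n -> slice w x y = z -> I (inl A) x y.
Proof.
move=> HI; apply: gen_ind_nested => A c0 cs z hr Ht Hn x y hxy hyn hz.
have hconj := conj_holds_rule Ht Hn.
have [body [hbody hok]] : exists body,
    List.In body (concat_choices (map conj_bodies (c0 :: cs))) /\ holds_all I x y body.
  apply: concat_choices_complete => _ /In_map [c [hc ->]].
  apply: conj_bodies_complete (horn_model_len HI) hxy hyn (conj_len_max hr hc) _.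
  by rewrite hz; apply: hconj.
have hin : List.In (HClause (Some (inl A)) body) horn_of_grammar.
  right; apply/In_cat; right; apply/In_flatten; exists (rule_clauses (A, c0, cs)).
  by split; apply/In_map; [exists (A, c0, cs)|exists body].
by apply: (HI _ hin x y) => //; [lia|lia|case/andP: hxy].
Qed.

Lemma In_horn_of_grammar cl : List.In cl horn_of_grammar ->
  [\/ cl = start_clause, List.In cl len_clauses
     | exists2 r, List.In r P & List.In cl (rule_clauses r)].
Proof.
rewrite -[horn_of_grammar]cat1s => /In_cat [[<-|[]]|/In_cat [h|]].
- by constructor 1.
- by constructor 2.
- by case/In_flatten=> s [/In_map [r [hr ->]] h]; constructor 3; exists r.
Qed.

Lemma slice_interp_model : ~ gen P S w -> horn_model slice_interp.
Proof.
move=> hS cl /In_horn_of_grammar [->|[<-|/In_map [k [/In_iota hk ->]]]|[[[A c0] cs] hr]].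
- move=> x y _ _ _ hb; apply: hS.
  case: (hb _ (or_intror (or_intror (or_introl erefl)))) => /= + _.
  move: (hb _ (or_introl erefl)) (hb _ (or_intror (or_introl erefl))) => /= /eqP -> /eqP ->.
  by rewrite slice_full.
- by move=> x y _ _ _ hb /=; rewrite (hb _ (or_introl erefl)) inordK // addn0.
- move=> x y _ hy _ hb /=; rewrite inordK; last lia.
  move: (hb _ (or_introl erefl)) (hb _ (or_intror (or_introl erefl))) => /= hlt [].
  by rewrite inordK /suc; lia.
- case/In_map=> b [hb ->] x y hx hy hxy hok; apply: (gen_rule_conj hr) => c hc.
  have hcb : List.In (conj_bodies c) (map conj_bodies (c0 :: cs)) by apply/In_map; exists c.
  have [b' [hb' hok']] := concat_choices_sound hb hok hcb.
  by apply: (conj_bodies_sound _ _ (conj_len_max hr hc) hb' hok'); lia.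
Qed.

Lemma horn_of_grammar_models : w <> [::] -> horn_models horn_of_grammar w <-> ~ gen P S w.
Proof.
move=> wne; have hn : 0 < n by case: (w) wne.
split => [[I HI] hg|hS]; last by exists slice_interp; exact: slice_interp_model.
have hI := horn_model_gen HI hg (_ : 1 <= 1 <= n) (leqnn n) (slice_full w).
apply: (HI _ (or_introl erefl) 1 n) => //; [lia|].
by move=> l [<-|[<-|[<-|[]]]]; rewrite /hlit_sem /=; [|rewrite eqxx|split; [apply: hI|]].
Qed.
End HornOfGrammar.

Section ZWords.
Variable Sigma : finType.
Implicit Types (w : seq Sigma) (ch : Z -> option Sigma).

(* A word is seen as a partial map on Z, defined exactly on its positions
   [1, n]; the successor and predecessor of a position saturate at the ends of
   the maximal defined block around it. *)
Definition zword w (i : Z) : option Sigma :=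
  if (0 <? i)%Z then onth w (Z.to_nat i).-1 else None.

Definition zsuc ch (i : Z) : Z := if ch (i + 1)%Z is Some _ then (i + 1)%Z else i.
Definition zpred ch (i : Z) : Z := if ch (i - 1)%Z is Some _ then (i - 1)%Z else i.
Definition zshift ch (i : Z) (a : int) : Z :=
  match a with Posz k => iter k (zsuc ch) i | Negz k => iter k.+1 (zpred ch) i end.
Definition zshiftdown ch (i : Z) (b : nat) : Z := iter b (zpred ch) i.

Definition zunary ch (U : unary Sigma) (p : Z) : bool :=
  match U with
  | UQ s => ch p == Some s
  | Umin => ch (p - 1)%Z == None
  | Umax => ch (p + 1)%Z == None
  end.

Lemma zword_pos w i : (0 < i)%Z -> zword w i = onth w (Z.to_nat i).-1.
Proof. by move=> h; rewrite /zword (_ : (0 <? i)%Z = true) //; lia. Qed.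

Lemma zword_in w i : (1 <= i <= Z.of_nat (size w))%Z -> exists s, zword w i = Some s.
Proof.
move=> h; rewrite zword_pos; last lia.
have : (Z.to_nat i).-1 < size w by lia.
by rewrite -onthTE; case: onth => // s _; exists s.
Qed.

Lemma zword_out w i : (i < 1 \/ Z.of_nat (size w) < i)%Z -> zword w i = None.
Proof. by rewrite /zword; case: ifP => // h1 h2; apply: onth_default; lia. Qed.

Lemma zsuc_word w i : 1 <= i <= size w ->
  zsuc (zword w) (Z.of_nat i) = Z.of_nat (suc (size w) i).
Proof.
move=> h; rewrite /zsuc /suc; have [hi|hi] := ltnP i (size w).
- by have [s ->] := @zword_in w (Z.of_nat i + 1) ltac:(lia); lia.
- by rewrite zword_out; lia.
Qed.

Lemma zpred_word w i : 1 <= i <= size w ->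
  zpred (zword w) (Z.of_nat i) = Z.of_nat (pred_pos i).
Proof.
move=> h; rewrite /zpred /pred_pos; have [hi|hi] := ltnP 1 i.
- by have [s ->] := @zword_in w (Z.of_nat i - 1) ltac:(lia); lia.
- by rewrite zword_out; lia.
Qed.

Lemma iter_zsuc_word w k i : 1 <= i <= size w ->
  iter k (zsuc (zword w)) (Z.of_nat i) = Z.of_nat (iter k (suc (size w)) i).
Proof.
move=> h; elim: k => [|k IH] //=.
by rewrite IH zsuc_word // iter_suc //; lia.
Qed.

Lemma iter_zpred_word w k i : 1 <= i <= size w ->
  iter k (zpred (zword w)) (Z.of_nat i) = Z.of_nat (iter k pred_pos i).
Proof.
move=> h; elim: k => [|k IH] //=.
by rewrite IH zpred_word // iter_pred_pos //; lia.
Qed.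

Lemma zshift_word w x a : 1 <= x <= size w ->
  zshift (zword w) (Z.of_nat x) a = Z.of_nat (shift (size w) x a).
Proof. by case: a => k h; [exact: iter_zsuc_word|exact: (iter_zpred_word k.+1)]. Qed.

Lemma zshiftdown_word w y b : 1 <= y <= size w ->
  zshiftdown (zword w) (Z.of_nat y) b = Z.of_nat (shiftdown y b).
Proof. exact: iter_zpred_word. Qed.

Lemma zunary_word w U p : 1 <= p <= size w ->
  zunary (zword w) U (Z.of_nat p) = unary_sem w U p.
Proof.
move=> h; case: U => [s||] /=.
- by rewrite zword_pos ?Nat2Z.id //; lia.
- have [hp|hp] := ltnP 1 p.
  + by have [s ->] := @zword_in w (Z.of_nat p - 1) ltac:(lia); apply/esym/negbTE; lia.
  + by rewrite zword_out ?eqxx; [apply/esym/eqP|]; lia.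
- have [hp|hp] := ltnP p (size w).
  + by have [s ->] := @zword_in w (Z.of_nat p + 1) ltac:(lia); apply/esym/negbTE; lia.
  + by rewrite zword_out ?eqxx; [apply/esym/eqP|]; lia.
Qed.

Definition agree_at ch ch' (x x' lo hi : Z) : Prop :=
  forall k, (lo <= k <= hi)%Z -> ch (x + k)%Z = ch' (x' + k)%Z.

Lemma agree_at_sub ch ch' x x' lo hi lo' hi' : (lo <= lo')%Z -> (hi' <= hi)%Z ->
  agree_at ch ch' x x' lo hi -> agree_at ch ch' x x' lo' hi'.
Proof. move=> h1 h2 h k hk; apply: h; lia. Qed.

Lemma iter_zsuc_agree ch ch' x x' m k :
  agree_at ch ch' x x' (- m) m -> (Z.of_nat k < m)%Z ->
  (iter k (zsuc ch) x - x = iter k (zsuc ch') x' - x' /\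
   0 <= iter k (zsuc ch) x - x <= Z.of_nat k)%Z.
Proof.
move=> ha; elim: k => [|k IH] hk /=; first lia.
have [e1 e2] := IH ltac:(lia).
set i := iter k (zsuc ch) x in e1 e2 *; set i' := iter k (zsuc ch') x' in e1 e2 *.
rewrite /zsuc.
have -> : (i + 1 = x + (i - x + 1))%Z by lia.
have -> : (i' + 1 = x' + (i - x + 1))%Z by lia.
rewrite (ha (i - x + 1)%Z); last lia.
case: (ch' _); lia.
Qed.

Lemma iter_zpred_agree ch ch' x x' m k :
  agree_at ch ch' x x' (- m) m -> (Z.of_nat k < m)%Z ->
  (iter k (zpred ch) x - x = iter k (zpred ch') x' - x' /\
   - Z.of_nat k <= iter k (zpred ch) x - x <= 0)%Z.
Proof.
move=> ha; elim: k => [|k IH] hk /=; first lia.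
have [e1 e2] := IH ltac:(lia).
set i := iter k (zpred ch) x in e1 e2 *; set i' := iter k (zpred ch') x' in e1 e2 *.
rewrite /zpred.
have -> : (i - 1 = x + (i - x - 1))%Z by lia.
have -> : (i' - 1 = x' + (i - x - 1))%Z by lia.
rewrite (ha (i - x - 1)%Z); last lia.
case: (ch' _); lia.
Qed.

Lemma zshift_agree ch ch' x x' m a :
  agree_at ch ch' x x' (- m) m -> (Z.of_nat (absz a) < m)%Z ->
  (zshift ch x a - x = zshift ch' x' a - x' /\ Z.abs (zshift ch x a - x) <= Z.of_nat (absz a))%Z.
Proof.
case: a => k ha hk.
- have := iter_zsuc_agree ha hk; rewrite /=; lia.
- have e1 : zshift ch x (Negz k) = iter k.+1 (zpred ch) x by [].
  have e2 : zshift ch' x' (Negz k) = iter k.+1 (zpred ch') x' by [].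
  rewrite e1 e2; have := iter_zpred_agree (k := k.+1) ha hk; rewrite /=; lia.
Qed.

Lemma zshiftdown_agree ch ch' y y' m b :
  agree_at ch ch' y y' (- m) m -> (Z.of_nat b < m)%Z ->
  (zshiftdown ch y b - y = zshiftdown ch' y' b - y' /\
   - Z.of_nat b <= zshiftdown ch y b - y <= 0)%Z.
Proof. exact: iter_zpred_agree. Qed.

Lemma zunary_agree ch ch' x x' m U d : agree_at ch ch' x x' (- m) m -> (Z.abs d + 1 <= m)%Z ->
  zunary ch U (x + d) = zunary ch' U (x' + d).
Proof.
move=> ha hd; case: U => [s||] /=.
- by rewrite (ha d) //; lia.
- have -> : (x + d - 1 = x + (d - 1))%Z by lia.
  have -> : (x' + d - 1 = x' + (d - 1))%Z by lia.
  by rewrite (ha (d - 1)%Z) //; lia.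
- have -> : (x + d + 1 = x + (d + 1))%Z by lia.
  have -> : (x' + d + 1 = x' + (d + 1))%Z by lia.
  by rewrite (ha (d + 1)%Z) //; lia.
Qed.

(* A literal splits into a local test [zlit], which only reads letters at
   bounded distance from x and y, and a relational part [rel_lit_holds]. *)
Definition zlit (T : Type) ch (x y : Z) (l : hlit Sigma T) : bool :=
  match l with
  | LUn pos U v a => let p := zshift ch (if v is VX then x else y) a in
                     if pos then zunary ch U p else ~~ zunary ch U p
  | LEq => (x =? y)%Z
  | LLt => (x <? y)%Z
  | LRel _ a b => (zshift ch x (Posz a) <=? zshiftdown ch y b)%Z
  end.

Definition rel_lit_holds (T : Type) (I : T -> nat -> nat -> Prop) n x y (l : hlit Sigma T) :=
  if l is LRel Sr a b then I Sr (shift n x (Posz a)) (shiftdown y b) else True.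

Definition lit_offset (T : Type) (l : hlit Sigma T) : nat :=
  match l with
  | LUn _ _ _ a => absz a
  | LRel _ a b => maxn a b
  | _ => 0
  end.

Lemma hlit_sem_zlit (T : Type) w (I : T -> nat -> nat -> Prop) x y l :
  1 <= x <= size w -> 1 <= y <= size w ->
  hlit_sem w I x y l <->
  zlit (zword w) (Z.of_nat x) (Z.of_nat y) l /\ rel_lit_holds I (size w) x y l.
Proof.
move=> hx hy; case: l => [pos U v a| | |Sr a b] /=.
- have hv : 1 <= (if v is VX then x else y) <= size w by case: v.
  have -> : (if v is VX then Z.of_nat x else Z.of_nat y) = Z.of_nat (if v is VX then x else y).
    by clear hv; case: v.
  rewrite zshift_word // zunary_word; last exact: shift_range.
  by case: pos; split => [h|[]] //.
- split => [->|[/Z.eqb_eq]]; [split => //; apply/Z.eqb_eq|]; lia.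
- split => [h|[/Z.ltb_lt]]; [split => //; apply/Z.ltb_lt|]; lia.
- have /= -> := zshift_word (Posz a) hx; rewrite zshiftdown_word //.
  by split => [[h1 h2]|[/Z.leb_le h1 h2]]; [split => //; apply/Z.leb_le|split => //]; lia.
Qed.

Lemma zlit_agree (T : Type) ch ch' x y x' y' (m : Z) (l : hlit Sigma T) :
  agree_at ch ch' x x' (- m) m -> agree_at ch ch' y y' (- m) m ->
  (x <= y)%Z -> (x' <= y')%Z ->
  (y - x = y' - x' \/ (2 * m - 4 < y - x /\ 2 * m - 4 < y' - x'))%Z ->
  (Z.of_nat (lit_offset l) + 2 <= m)%Z -> zlit ch x y l = zlit ch' x' y' l.
Proof.
move=> hax hay hxy hxy' hlen; case: l => [pos U v a| | |Sr a b] /= ho.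
- have hv : agree_at ch ch' (if v is VX then x else y) (if v is VX then x' else y') (- m) m.
    by case: v.
  set p := if v is VX then x else y in hv *; set p' := if v is VX then x' else y' in hv *.
  have [e1 e2] := zshift_agree hv (a := a) ltac:(lia).
  have -> : zshift ch p a = (p + (zshift ch p a - p))%Z by lia.
  have -> : zshift ch' p' a = (p' + (zshift ch p a - p))%Z by lia.
  by rewrite (zunary_agree U hv) //; lia.
- case: hlen => h.
  + apply/idP/idP => /Z.eqb_eq h'; apply/Z.eqb_eq; lia.
  + have -> : (x =? y)%Z = false by apply/Z.eqb_neq; lia.
    by apply/esym/Z.eqb_neq; lia.
- case: hlen => h.
  + apply/idP/idP => /Z.ltb_lt h'; apply/Z.ltb_lt; lia.
  + have -> : (x <? y)%Z = true by apply/Z.ltb_lt; lia.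
    by apply/esym/Z.ltb_lt; lia.
- have [e1 e2] := zshift_agree hax (a := Posz a) ltac:(rewrite /=; lia).
  have [e3 e4] := zshiftdown_agree (b := b) hay ltac:(lia).
  rewrite /= in e1 e2.
  case: hlen => h.
  + apply/idP/idP => /Z.leb_le h'; apply/Z.leb_le; lia.
  + have -> : (iter a (zsuc ch) x <=? zshiftdown ch y b)%Z = true by apply/Z.leb_le; lia.
    by apply/esym/Z.leb_le; lia.
Qed.

Section Contexts.
Variable c : nat.

Definition left_ctx ch (i : Z) : seq (option Sigma) :=
  [seq ch (i - Z.of_nat c + Z.of_nat k)%Z | k <- iota 0 c].
Definition right_ctx ch (i : Z) : seq (option Sigma) :=
  [seq ch (i + 1 + Z.of_nat k)%Z | k <- iota 0 c].

Lemma size_left_ctx ch i : size (left_ctx ch i) = c.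
Proof. by rewrite size_map size_iota. Qed.
Lemma size_right_ctx ch i : size (right_ctx ch i) = c.
Proof. by rewrite size_map size_iota. Qed.

Definition left_ctxt ch i : c.-tuple (option Sigma) := Tuple (introT eqP (size_left_ctx ch i)).
Definition right_ctxt ch i : c.-tuple (option Sigma) := Tuple (introT eqP (size_right_ctx ch i)).

Lemma nth_left_ctx ch i j : j < c ->
  nth None (left_ctx ch i) j = ch (i - Z.of_nat c + Z.of_nat j)%Z.
Proof. by move=> hj; rewrite (nth_map 0) ?size_iota // nth_iota. Qed.

Lemma nth_right_ctx ch i j : j < c -> nth None (right_ctx ch i) j = ch (i + 1 + Z.of_nat j)%Z.
Proof. by move=> hj; rewrite (nth_map 0) ?size_iota // nth_iota. Qed.

Lemma left_ctx_agree ch ch' x x' d :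
  agree_at ch ch' x x' (- Z.of_nat c) (Z.of_nat c - 1) -> (0 <= d <= Z.of_nat c)%Z ->
  left_ctxt ch (x + d) = left_ctxt ch' (x' + d).
Proof.
move=> ha hd; apply: val_inj => /=; apply/eq_in_map => k; rewrite mem_iota => hk.
have -> : (x + d - Z.of_nat c + Z.of_nat k = x + (d - Z.of_nat c + Z.of_nat k))%Z by lia.
have -> : (x' + d - Z.of_nat c + Z.of_nat k = x' + (d - Z.of_nat c + Z.of_nat k))%Z by lia.
by apply: ha; lia.
Qed.

Lemma right_ctx_agree ch ch' y y' e :
  agree_at ch ch' y y' (- (Z.of_nat c - 1)) (Z.of_nat c) -> (0 <= e <= Z.of_nat c)%Z ->
  right_ctxt ch (y - e) = right_ctxt ch' (y' - e).
Proof.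
move=> ha hd; apply: val_inj => /=; apply/eq_in_map => k; rewrite mem_iota => hk.
have -> : (y - e + 1 + Z.of_nat k = y + (1 - e + Z.of_nat k))%Z by lia.
have -> : (y' - e + 1 + Z.of_nat k = y' + (1 - e + Z.of_nat k))%Z by lia.
by apply: ha; lia.
Qed.
End Contexts.

(* A factor z is remembered by [KShort z] if |z| < 2c, and otherwise by
   [KLong p q] with p, q its first and last c letters. *)
Inductive key := KShort of seq Sigma | KLong of seq Sigma & seq Sigma.

(* The pseudo-word lc ++ k ++ rc, indexed from 0, in which x sits at position c
   and y at [key_y c k]: around x and y it looks exactly like the word. *)
Definition key_view (lc rc : seq (option Sigma)) (k : key) : seq (option Sigma) :=
  match k with
  | KShort z => lc ++ map Some z ++ rc
  | KLong p q => lc ++ map Some p ++ map Some q ++ rc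
  end.

Definition view_char (s : seq (option Sigma)) (i : Z) : option Sigma :=
  if (i <? 0)%Z then None else nth None s (Z.to_nat i).

Definition key_y (c : nat) (k : key) : Z :=
  match k with
  | KShort z => (Z.of_nat (c + size z) - 1)%Z
  | KLong _ _ => (Z.of_nat (3 * c) - 1)%Z
  end.

Definition describes (c : nat) (k : key) (z : seq Sigma) : Prop :=
  match k with
  | KShort z' => z' = z
  | KLong p q => [/\ p = take c z, q = drop (size z - c) z & 2 * c <= size z]
  end.

Definition key_prefix (k : key) (d : nat) : seq Sigma :=
  match k with KShort z => take d z | KLong p _ => take d p end.
Definition key_suffix (k : key) (e : nat) : seq Sigma :=
  match k with KShort z => drop (size z - e) z | KLong _ q => drop (size q - e) q end.

Lemma key_prefixE c k z d : describes c k z -> d <= c -> key_prefix k d = take d z.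
Proof. by case: k => [z'|p q] /= => [->|[-> _ _] hd]; rewrite ?take_takel. Qed.

Lemma key_suffixE c k z e : describes c k z -> e <= c -> key_suffix k e = drop (size z - e) z.
Proof.
case: k => [z'|p q] /=; first by move=> ->.
by case=> _ -> hz he; rewrite drop_drop size_drop; congr drop; lia.
Qed.

Section KeyView.
Variables (c : nat) (w : seq Sigma) (x y : nat).
Hypotheses (c_ge3 : 3 <= c) (hxy : 1 <= x <= y) (hyw : y <= size w).
Notation z := (slice w x y).
Notation lc := (left_ctx c (zword w) (Z.of_nat x)).
Notation rc := (right_ctx c (zword w) (Z.of_nat y)).

Lemma nth_key_view_short j : j < 2 * c + size z ->
  nth None (key_view lc rc (KShort z)) j = zword w (Z.of_nat x - Z.of_nat c + Z.of_nat j)%Z.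
Proof.
move=> hj; have hz : size z = y.+1 - x by rewrite size_slice //; lia.
rewrite /key_view nth_cat size_left_ctx; case: ifP => h1; first by rewrite nth_left_ctx.
rewrite nth_cat size_map; case: ifP => h2.
- by rewrite -onthE slice_onth ?zword_pos; [congr onth|..]; lia.
- by rewrite nth_right_ctx; [congr zword|]; lia.
Qed.

Lemma nth_key_view_long j : 2 * c <= size z -> j < 4 * c ->
  nth None (key_view lc rc (KLong (take c z) (drop (size z - c) z))) j =
  if j < 2 * c then zword w (Z.of_nat x - Z.of_nat c + Z.of_nat j)%Z
  else zword w (Z.of_nat y - Z.of_nat (3 * c) + 1 + Z.of_nat j)%Z.
Proof.
move=> hzc hj; have hz : size z = y.+1 - x by rewrite size_slice //; lia.
have hp : size (take c z) = c by rewrite size_takel //; lia.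
have hq : size (drop (size z - c) z) = c by rewrite size_drop; lia.
rewrite /key_view nth_cat size_left_ctx; case: ifP => h1.
  by rewrite nth_left_ctx // ifT //; lia.
rewrite nth_cat size_map hp; case: ifP => h2.
  rewrite -onthE onth_take ifT; last lia.
  by rewrite slice_onth ?zword_pos ?ifT; [congr onth|..]; lia.
rewrite nth_cat size_map hq; case: ifP => h3.
  by rewrite -onthE onth_drop slice_onth ?zword_pos ?ifF; [congr onth|..]; lia.
by rewrite nth_right_ctx ?ifF; [congr zword|..]; lia.
Qed.

Variable k : key.
Hypothesis hk : describes c k z.
Notation view := (view_char (key_view lc rc k)).
Notation y0 := (key_y c k).

Lemma agree_key_view :
  [/\ agree_at (zword w) view (Z.of_nat x) (Z.of_nat c) (- Z.of_nat c) (Z.of_nat c - 1),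
      agree_at (zword w) view (Z.of_nat y) y0 (- (Z.of_nat c - 1)) (Z.of_nat c) &
      (Z.of_nat y - Z.of_nat x = y0 - Z.of_nat c \/
       (2 * (Z.of_nat c - 1) - 4 < Z.of_nat y - Z.of_nat x /\
        2 * (Z.of_nat c - 1) - 4 < y0 - Z.of_nat c))%Z].
Proof.
have hz : size z = y.+1 - x by rewrite size_slice //; lia.
case: k hk => [z' /= ->|p q [-> -> hzc]].
- split=> [i hi|i hi|]; rewrite /key_y /view_char ?ifF; try lia.
  + by rewrite nth_key_view_short; [congr zword|]; lia.
  + by rewrite nth_key_view_short; [congr zword|]; lia.
- split=> [i hi|i hi|]; rewrite /key_y /view_char ?ifF; try lia.
  + by rewrite nth_key_view_long ?ifT; [congr zword|..]; lia.
  + by rewrite nth_key_view_long ?ifF; [congr zword|..]; lia.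
Qed.

Lemma zlit_key_view (T : Type) (l : hlit Sigma T) : lit_offset l + 3 <= c ->
  zlit (zword w) (Z.of_nat x) (Z.of_nat y) l = zlit view (Z.of_nat c) y0 l.
Proof.
move=> ho; have [h1 h2 h3] := agree_key_view.
apply: (zlit_agree (m := (Z.of_nat c - 1)%Z)); try lia.
- by apply: agree_at_sub h1; lia.
- by apply: agree_at_sub h2; lia.
Qed.

Lemma rel_lit_key_view a b : a + 3 <= c -> b + 3 <= c ->
  let xv := zshift view (Z.of_nat c) (Posz a) in
  let yv := zshiftdown view y0 b in
  let x' := shift (size w) x (Posz a) in
  let y' := shiftdown y b in
  [/\ left_ctxt c view xv = left_ctxt c (zword w) (Z.of_nat x'),
      right_ctxt c view yv = right_ctxt c (zword w) (Z.of_nat y'),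
      key_prefix k (Z.to_nat (xv - Z.of_nat c)) = take (x' - x) z &
      key_suffix k (Z.to_nat (y0 - yv)) = drop (size z - (y - y')) z].
Proof.
move=> ha hb /=; have [h1 h2 _] := agree_key_view.
have h1' : agree_at (zword w) view (Z.of_nat x) (Z.of_nat c) (- (Z.of_nat c - 1)) (Z.of_nat c - 1).
  by apply: agree_at_sub h1; lia.
have h2' : agree_at (zword w) view (Z.of_nat y) y0 (- (Z.of_nat c - 1)) (Z.of_nat c - 1).
  by apply: agree_at_sub h2; lia.
have [ex hex] := iter_zsuc_agree (k := a) h1' ltac:(lia).
have [ey hey] := zshiftdown_agree (b := b) h2' ltac:(lia).
have /= rx := zshift_word (Posz a) (w := w) (x := x) ltac:(lia).
have ry := zshiftdown_word b (w := w) (y := y) ltac:(lia).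
have /= hx' : 1 <= shift (size w) x (Posz a) <= size w by apply: shift_range; lia.
have hy' : 1 <= shiftdown y b <= size w by apply: shiftdown_range; lia.
rewrite /zshiftdown in ey hey ry *.
split.
- rewrite (_ : iter a _ _ = Z.of_nat c + (iter a (zsuc (zword w)) (Z.of_nat x) - Z.of_nat x))%Z.
    by rewrite -(left_ctx_agree h1); [congr left_ctxt|]; lia.
  lia.
- rewrite (_ : iter b _ _ = y0 - (Z.of_nat y - iter b (zpred (zword w)) (Z.of_nat y)))%Z.
    by rewrite -(right_ctx_agree h2); [congr right_ctxt|]; lia.
  lia.
- by rewrite (key_prefixE hk); [congr take|]; lia.
- by rewrite (key_suffixE hk); [congr drop|]; lia.
Qed.
End KeyView.
End ZWords.

Section GrammarOfHorn.
Variables (Sigma T : finType) (psi : seq (hclause Sigma T)) (c : nat).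
Hypothesis c_ge3 : 3 <= c.
Hypothesis lit_offset_c :
  forall cl l, List.In cl psi -> List.In l (hc_body cl) -> lit_offset l + 3 <= c.

Notation ctx := (c.-tuple (option Sigma)).
(* [None] derives every word; [Some (r, lc, rc)] derives the factors w_x..w_y
   for which r(x, y) is forced, lc and rc being the c letters around them. *)
Definition NT : finType := option (T * ctx * ctx).

Definition real_nt (w : seq Sigma) r x y : NT :=
  Some (r, left_ctxt c (zword w) (Z.of_nat x), right_ctxt c (zword w) (Z.of_nat y)).

Definition key_char (lc rc : ctx) (k : key Sigma) : Z -> option Sigma :=
  view_char (key_view lc rc k).

Definition rel_conj (lc rc : ctx) (k : key Sigma) (l : hlit Sigma T) : option (lconj Sigma NT) :=
  if l is LRel Sr a b then
    let x' := zshift (key_char lc rc k) (Z.of_nat c) (Posz a) in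
    let y' := zshiftdown (key_char lc rc k) (key_y c k) b in
    Some (CNT (key_prefix k (Z.to_nat (x' - Z.of_nat c)))
              (Some (Sr, left_ctxt c (key_char lc rc k) x', right_ctxt c (key_char lc rc k) y'))
              (key_suffix k (Z.to_nat (key_y c k - y'))))
  else None.

Definition key_conj (k : key Sigma) : lconj Sigma NT :=
  match k with KShort z => CTerm _ z | KLong p q => CNT p None q end.

(* The rule of [cl] for given contexts and key exists only when the local part
   of its body holds, which the contexts and the key alone determine. *)
Definition clause_rules (cl : hclause Sigma T) (lc rc : ctx) (k : key Sigma) :
    seq (lrule Sigma NT) :=
  if hc_head cl is Some r then
    if all (zlit (key_char lc rc k) (Z.of_nat c) (key_y c k)) (hc_body cl)
    then [:: (Some (r, lc, rc), key_conj k, pmap (rel_conj lc rc k) (hc_body cl))] else [::]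
  else [::].

Definition keys : seq (key Sigma) :=
  [seq KShort (tval t) | m <- iota 1 (2 * c).-1, t <- enum {: m.-tuple Sigma}] ++
  [seq KLong (tval p) (tval q) | p <- enum {: c.-tuple Sigma}, q <- enum {: c.-tuple Sigma}].

Definition universal_rules : seq (lrule Sigma NT) :=
  (None, CTerm _ [::], [::]) :: [seq (None, CNT [:: s] None [::], [::]) | s <- enum Sigma].

Definition grammar_of_horn : seq (lrule Sigma NT) :=
  universal_rules ++
  flatten [seq flatten [seq flatten [seq flatten [seq clause_rules cl lc rc k | k <- keys]
    | rc <- enum {: ctx}] | lc <- enum {: ctx}] | cl <- psi].

Lemma In_grammar_of_horn r lc rc c0 cs : List.In (Some (r, lc, rc), c0, cs) grammar_of_horn ->
  exists cl k, [/\ List.In cl psi, List.In k keys, hc_head cl = Some r,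
     all (zlit (key_char lc rc k) (Z.of_nat c) (key_y c k)) (hc_body cl) &
     c0 = key_conj k /\ cs = pmap (rel_conj lc rc k) (hc_body cl)].
Proof.
case/In_cat=> [/= [|/In_map [s [_ ]]]|] //.
move=> /In_flatten [s1 [/In_map [cl [hcl ->]] /In_flatten [s2 [/In_map [lc' [_ ->]]
  /In_flatten [s3 [/In_map [rc' [_ ->]] /In_flatten [s4 [/In_map [k [hk ->]] hin]]]]]]]].
exists cl, k; move: hin; rewrite /clause_rules.
by case: (hc_head cl) => [r'|] //; case: ifP => // hall [[<- <- <- <- <-]|[]].
Qed.

Lemma clause_rule_In_grammar cl k lc rc r :
  List.In cl psi -> List.In k keys -> hc_head cl = Some r ->
  all (zlit (key_char lc rc k) (Z.of_nat c) (key_y c k)) (hc_body cl) ->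
  List.In (Some (r, lc, rc), key_conj k, pmap (rel_conj lc rc k) (hc_body cl)) grammar_of_horn.
Proof.
move=> hcl hk hr hall; apply/In_cat; right.
apply/In_flatten; eexists; split; first by apply/In_map; exists cl.
apply/In_flatten; eexists; split; first by apply/In_map; exists lc; split; [exact: In_enum|].
apply/In_flatten; eexists; split; first by apply/In_map; exists rc; split; [exact: In_enum|].
apply/In_flatten; eexists; split; first by apply/In_map; exists k.
by rewrite /clause_rules hr hall; left.
Qed.

Lemma In_keys_short z : List.In (KShort z) keys -> 0 < size z.
Proof.
case/In_cat=> /In_flatten [s []]; last by case/In_map=> p [_ ->] /In_map [q []].
by case/In_map=> m [/In_iota hm ->] /In_map [t [_ [->]]]; rewrite size_tuple; lia.
Qed.

Lemma In_keys_long p q : List.In (KLong p q) keys -> size p = c /\ size q = c.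
Proof.
case/In_cat=> /In_flatten [s []]; first by case/In_map=> m [_ ->] /In_map [t []].
by case/In_map=> p' [_ ->] /In_map [q' [_ [-> ->]]]; rewrite !size_tuple.
Qed.

Definition key_of_factor (z : seq Sigma) : key Sigma :=
  if size z < 2 * c then KShort z else KLong (take c z) (drop (size z - c) z).

Lemma key_of_factor_In z : 0 < size z -> List.In (key_of_factor z) keys.
Proof.
move=> hz; rewrite /key_of_factor; case: ifP => h; apply/In_cat; [left|right]; apply/In_flatten.
- exists [seq KShort (tval t) | t <- enum {: (size z).-tuple Sigma}]; split.
    by apply/In_map; exists (size z); split => //; apply/In_iota; lia.
  by apply/In_map; exists (in_tuple z); split => //; exact: In_enum.
- have hp : size (take c z) == c by rewrite size_takel //; lia.
  have hq : size (drop (size z - c) z) == c by rewrite size_drop; apply/eqP; lia.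
  exists [seq KLong (tval (Tuple hp)) (tval q) | q <- enum {: c.-tuple Sigma}]; split.
    by apply/In_map; exists (Tuple hp); split => //; exact: In_enum.
  by apply/In_map; exists (Tuple hq); split => //; exact: In_enum.
Qed.

Lemma key_of_factorP z : describes c (key_of_factor z) z.
Proof. by rewrite /key_of_factor; case: ifP => h //=; split => //; lia. Qed.

Lemma gen_universal z : gen grammar_of_horn None z.
Proof.
elim: z => [|s z IH].
  apply: (@gen_rule_conj _ _ _ _ (CTerm _ [::]) [::]) => [|_ [<-|[]]] //.
  by apply/In_cat; left; left.
apply: (@gen_rule_conj _ _ _ _ (CNT [:: s] None [::]) [::]) => [|_ [<-|[]]].
- by right; apply/In_cat; left; apply/In_map; exists s; split => //; exact: In_enum.
- by exists z; rewrite cats0.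
Qed.

Lemma key_conj_holds k z : describes c k z -> conj_holds (gen grammar_of_horn) (key_conj k) z.
Proof.
case: k => [z'|p q] /=; first by move=> ->.
case=> -> -> hz; exists (drop c (take (size z - c) z)); split; last exact: gen_universal.
have e : take c z = take c (take (size z - c) z) by rewrite take_takel //; lia.
by rewrite e catA !cat_take_drop.
Qed.

Lemma key_conj_describes Q k z : List.In k keys -> conj_holds Q (key_conj k) z -> describes c k z.
Proof.
case: k => [z'|p q] hk /=; first by move=> ->.
have [hp hq] := In_keys_long hk; case=> m [-> _].
rewrite /describes take_size_cat // catA drop_size_cat; last by rewrite !size_cat; lia.
by split => //; rewrite !size_cat; lia.
Qed.

Lemma gen_nonempty X z : gen grammar_of_horn (Some X) z -> 0 < size z.
Proof.
move=> g; apply: (@gen_ind_nested _ _ _ (fun A z => A <> None -> 0 < size z) _ _ _ g) => //.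
move=> {g} [[[r lc] rc]|] c0 cs {}z hr Ht Hn _ //.
have [cl [k [_ hk _ _ [ec0 _]]]] := In_grammar_of_horn hr.
have := conj_holds_rule Ht Hn (or_introl erefl); rewrite ec0.
case: k hk {ec0} => [z'|p q] hk /= => [->|[m [-> _]]]; first exact: In_keys_short.
by have [hp _] := In_keys_long hk; rewrite !size_cat; lia.
Qed.

Lemma rel_conj_factor w x y k Sr a b : 1 <= x <= y -> y <= size w ->
  describes c k (slice w x y) -> a + 3 <= c -> b + 3 <= c ->
  zlit (zword w) (Z.of_nat x) (Z.of_nat y) (LRel _ Sr a b) ->
  let x' := shift (size w) x (Posz a) in let y' := shiftdown y b in
  let z := slice w x y in
  [/\ 1 <= x' <= y', y' <= size w,
      z = take (x' - x) z ++ slice w x' y' ++ drop (size z - (y - y')) z &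
      rel_conj (left_ctxt c (zword w) (Z.of_nat x)) (right_ctxt c (zword w) (Z.of_nat y)) k
        (LRel _ Sr a b) =
      Some (CNT (take (x' - x) z) (real_nt w Sr x' y') (drop (size z - (y - y')) z))].
Proof.
move=> hxy hyw hk ha hb hlit x' y' z.
have ex' : x' = minn (x + a) (size w) by rewrite /x' /= iter_suc; lia.
have ey' : y' = maxn (y - b) 1 by rewrite /y' shiftdownE; lia.
have hle : x' <= y'.
  by move: hlit; rewrite /= zshiftdown_word ?iter_zsuc_word ?iter_suc ?shiftdownE; lia.
have [e3 e4 e5 e6] := rel_lit_key_view c_ge3 hxy hyw hk ha hb.
split; [lia|lia|apply: slice_take_drop; lia|].
by rewrite /rel_conj /key_char /= e3 e4 e5 e6.
Qed.

Lemma grammar_of_horn_sound w (I : T -> nat -> nat -> Prop) :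
  (forall cl, List.In cl psi -> hclause_sem w I cl) ->
  forall A z, gen grammar_of_horn A z -> forall r x y, A = real_nt w r x y ->
  1 <= x <= y -> y <= size w -> slice w x y = z -> I r x y.
Proof.
move=> HI A z g; elim/gen_ind_nested: g => {}A c0 cs {}z hr Ht Hn r x y eA hxy hyw ez.
rewrite {}eA in hr; have [cl [k [hcl hk hhead hall [ec0 ecs]]]] := In_grammar_of_horn hr.
have hconj := conj_holds_rule Ht Hn.
have hkz : describes c k (slice w x y).
  by rewrite ez; apply: (key_conj_describes hk); rewrite -ec0; apply: hconj; left.
have := HI cl hcl x y; rewrite hhead; apply; [lia|lia|lia|] => l hl.
have hol := lit_offset_c hcl hl.
have hz : zlit (zword w) (Z.of_nat x) (Z.of_nat y) l.
  by rewrite (zlit_key_view c_ge3 hxy hyw hkz) //; exact: (proj1 (all_In _ _) hall l hl).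
apply/hlit_sem_zlit; [lia|lia|]; split => //.
case: l hl hol hz => // Sr a b hl /= hol hz.
have ha : a + 3 <= c by lia.
have hb : b + 3 <= c by lia.
have [hxy' hyw' edec erel] := rel_conj_factor (Sr := Sr) hxy hyw hkz ha hb hz.
have hin : List.In (CNT (take (shift (size w) x (Posz a) - x) (slice w x y))
    (real_nt w Sr (shift (size w) x (Posz a)) (shiftdown y b))
    (drop (size (slice w x y) - (y - shiftdown y b)) (slice w x y))) (c0 :: cs).
  by right; rewrite ecs; apply/In_pmap; exists (LRel _ Sr a b); split => //; rewrite erel.
have [m [em [_ IH]]] := hconj _ hin.
apply: (IH _ _ _ erefl hxy' hyw').
rewrite -ez {1}edec in em.
by have [_ /cat_eq_r ->] := cat_eq_l erefl em.
Qed.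

Definition gen_interp w (r : T) x y : Prop := gen grammar_of_horn (real_nt w r x y) (slice w x y).

Lemma gen_interp_model w cl r :
  List.In cl psi -> hc_head cl = Some r -> hclause_sem w (gen_interp w) cl.
Proof.
move=> hcl hhead x y hx hy hxy hb; rewrite hhead.
have hxy' : 1 <= x <= y by lia.
have hyw : y <= size w by lia.
have hkz := key_of_factorP (slice w x y); set k := key_of_factor _ in hkz.
have hk : List.In k keys by apply: key_of_factor_In; rewrite size_slice; lia.
have hreal l : List.In l (hc_body cl) ->
    zlit (zword w) (Z.of_nat x) (Z.of_nat y) l /\ rel_lit_holds (gen_interp w) (size w) x y l.
  by move=> hl; apply/hlit_sem_zlit => //; apply: hb.
have hall : all (zlit (key_char (left_ctxt c (zword w) (Z.of_nat x))
    (right_ctxt c (zword w) (Z.of_nat y)) k) (Z.of_nat c) (key_y c k)) (hc_body cl).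
  apply/all_In => l hl; rewrite -zlit_key_view //; first exact: (hreal l hl).1.
  exact: lit_offset_c hcl hl.
apply: (gen_rule_conj (clause_rule_In_grammar hcl hk hhead hall)) => cj [<-|/In_pmap [l [hl erel]]].
  exact: key_conj_holds.
case: l hl erel => // Sr a b hl erel; have [hz hI] := hreal _ hl.
have /= hol := lit_offset_c hcl hl.
have ha : a + 3 <= c by lia.
have hb' : b + 3 <= c by lia.
have [_ _ edec erel'] := rel_conj_factor (Sr := Sr) hxy' hyw hkz ha hb' hz.
case: (etrans (esym erel) erel') => ->.
by eexists; split; [exact: edec|exact: hI].
Qed.
End GrammarOfHorn.

Section Normalize.
Variables (Sigma R : finType) (phi : seq (hclause Sigma R)).

(* [Some (Some r)] stands for [r]; a bottom derived at (x, y) becomes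
   [Some None] at (x, y), and is then spread to [None] at (1, n). *)
Definition lifted : finType := option (option R).

Definition lift_lit (l : hlit Sigma R) : hlit Sigma lifted :=
  match l with
  | LUn pos U v a => LUn _ pos U v a
  | LEq => LEq _ _
  | LLt => LLt _ _
  | LRel r a b => LRel _ (Some (Some r) : lifted) a b
  end.

Definition lift_clause (cl : hclause Sigma R) : hclause Sigma lifted :=
  HClause (Some (Some (hc_head cl) : lifted)) (map lift_lit (hc_body cl)).

Definition bottom_clauses : seq (hclause Sigma lifted) :=
  [:: HClause (Some (None : lifted)) [:: LRel _ (Some None : lifted) 0 0];
      HClause (Some (None : lifted)) [:: LLt _ _; LRel _ (None : lifted) 1 0];
      HClause (Some (None : lifted)) [:: LLt _ _; LRel _ (None : lifted) 0 1]].

Definition normalize : seq (hclause Sigma lifted) := map lift_clause phi ++ bottom_clauses.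

Definition max_offset (cl : hclause Sigma lifted) : nat :=
  foldr maxn 0 (map (@lit_offset _ _) (hc_body cl)).
Definition reach : nat := foldr maxn 0 (map max_offset normalize) + 3.

Lemma reach_ge3 : 3 <= reach.
Proof. by rewrite /reach; lia. Qed.

Lemma lit_offset_reach cl l :
  List.In cl normalize -> List.In l (hc_body cl) -> lit_offset l + 3 <= reach.
Proof.
move=> hcl hl; rewrite /reach leq_add2r.
exact: leq_trans (leq_foldr_maxn (@lit_offset _ _) hl) (leq_foldr_maxn max_offset hcl).
Qed.

Notation G := (grammar_of_horn normalize reach).

Definition empty_ctx : reach.-tuple (option Sigma) := left_ctxt reach (fun _ => None) 0%Z.
Definition start_nt : NT Sigma lifted reach := Some (None, empty_ctx, empty_ctx).

Lemma real_nt_full w : 0 < size w -> real_nt reach w None 1 (size w) = start_nt.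
Proof.
move=> hw; congr (Some (_, _, _)); apply: val_inj => /=; rewrite /left_ctx /right_ctx.
all: by apply/eq_in_map => k; rewrite mem_iota => hk; rewrite zword_out //; lia.
Qed.

Definition lift_interp (I : R -> nat -> nat -> Prop) (t : lifted) : nat -> nat -> Prop :=
  if t is Some (Some r) then I r else fun _ _ => False.

Lemma lift_lit_sem w (J : lifted -> nat -> nat -> Prop) x y l :
  hlit_sem w J x y (lift_lit l) <-> hlit_sem w (fun r => J (Some (Some r))) x y l.
Proof. by case: l. Qed.

Lemma lift_interp_model w I : (forall cl, List.In cl phi -> hclause_sem w I cl) ->
  forall cl, List.In cl normalize -> hclause_sem w (lift_interp I) cl.
Proof.
move=> HI cl /In_cat [/In_map [cl0 [hcl0 ->]]|].
- move=> x y hx hy hxy hb; have := HI cl0 hcl0 x y hx hy hxy.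
  by rewrite /=; case: (hc_head cl0) => [r|]; apply=> l hl;
    apply/(lift_lit_sem w (lift_interp I))/hb/In_map; exists l.
- move=> [<-|[<-|[<-|[]]]] x y _ _ _ hb.
  + by have [] := hb _ (or_introl erefl).
  + by have [] := hb _ (or_intror (or_introl erefl)).
  + by have [] := hb _ (or_intror (or_introl erefl)).
Qed.

Lemma bottom_spread w (J : lifted -> nat -> nat -> Prop) :
  (forall cl, List.In cl bottom_clauses -> hclause_sem w J cl) ->
  forall x y, 1 <= x <= y -> y <= size w -> J None x y -> J None 1 (size w).
Proof.
move=> HJ x y; move: {2}(x.-1 + (size w - y)) (erefl (x.-1 + (size w - y))) => d.
elim: d x y => [|d IH] x y hd hxy hyw hJ.
  have ex : x = 1 by lia.
  have ey : y = size w by lia.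
  by rewrite -ex -ey.
have [hx|hx] := ltnP 1 x.
- apply: (IH (x.-1) y) => //; [lia|lia|].
  apply: (HJ _ (or_intror (or_introl erefl)) (x.-1) y); [lia|lia|lia|].
  move=> l [<-|[<-|[]]] /=; first lia.
  have -> : suc (size w) x.-1 = x by rewrite /suc; lia.
  by split; last lia.
- apply: (IH x y.+1) => //; [lia|lia|lia|].
  apply: (HJ _ (or_intror (or_intror (or_introl erefl))) x y.+1); [lia|lia|lia|].
  move=> l [<-|[<-|[]]] /=; first lia.
  have -> : pred_pos y.+1 = y by rewrite /pred_pos; lia.
  by split; last lia.
Qed.

Lemma gen_start_unsat w : gen G start_nt w -> w <> [::] /\ ~ horn_models phi w.
Proof.
move=> g; have hw := gen_nonempty reach_ge3 g; split => [|[I HI]]; first by case: (w) hw.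
apply: (grammar_of_horn_sound reach_ge3 lit_offset_reach (lift_interp_model HI) g
  (r := None) (x := 1) (y := size w)); rewrite ?real_nt_full ?slice_full //; lia.
Qed.

Lemma unsat_gen_start w : w <> [::] -> ~ horn_models phi w -> gen G start_nt w.
Proof.
move=> wne hunsat; have hw : 0 < size w by case: (w) wne.
apply: NNPP => hng; apply: hunsat.
pose J := gen_interp normalize reach w.
have HJ cl : List.In cl normalize -> hclause_sem w J cl.
  move=> hcl; have [r hr] : exists r, hc_head cl = Some r.
    by move/In_cat: hcl => [/In_map [cl0 [_ ->]]|[<-|[<-|[<-|[]]]]]; eexists.
  exact: (gen_interp_model reach_ge3 lit_offset_reach hcl hr).
have Hbot cl : List.In cl bottom_clauses -> hclause_sem w J cl.
  by move=> hcl; apply: HJ; apply/In_cat; right.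
exists (fun r => J (Some (Some r))) => cl hcl x y hx hy hxy hb.
have hin : List.In (lift_clause cl) normalize by apply/In_cat; left; apply/In_map; exists cl.
have hb' l : List.In l (map lift_lit (hc_body cl)) -> hlit_sem w J x y l.
  by case/In_map=> l0 [hl0 ->]; apply/lift_lit_sem/hb.
move: (HJ _ hin x y hx hy hxy hb') => /=; case: (hc_head cl) => // hbot.
apply: hng; rewrite -(real_nt_full hw) -[X in gen _ _ X]slice_full.
apply: (bottom_spread Hbot _ _ (Hbot _ (or_introl erefl) x y hx hy hxy _)); [lia|lia|].
by move=> l [<-|[]] /=; split; [exact: hbot|lia].
Qed.

Lemma grammar_of_horn_complement w :
  (w <> [::] /\ ~ horn_models phi w) <-> gen G start_nt w.
Proof. by split => [[]|]; [exact: unsat_gen_start|exact: gen_start_unsat]. Qed.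
End Normalize.

Theorem theorem3 (Sigma : finType) (L : seq Sigma -> Prop)
    (HL : forall w, L w -> w <> [::]) :
  incl_ESO_HORN L <-> LinConj (fun w => w <> [::] /\ ~ L w).
Proof.
split.
- move=> [R [phi HR]].
  exists (NT Sigma (lifted R) (reach phi)), (grammar_of_horn (normalize phi) (reach phi)).
  exists (start_nt phi).
  move=> w; rewrite -grammar_of_horn_complement HR.
  by split=> -[wne h]; split=> // hm; apply: h; [split|case: hm].
- move=> [N [P [S HP]]].
  pose eps B := if excluded_middle_informative (gen P B [::]) then true else false.
  have epsP B : eps B <-> gen P B [::] by rewrite /eps; case: excluded_middle_informative.
  exists (hrel P), (horn_of_grammar P S eps) => w.
  split => [hL|[wne hm]].
  + have wne := HL w hL; split => //; apply/(horn_of_grammar_models S epsP wne).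
    by move/HP=> [_ []].
  + apply: NNPP => hL; apply: (proj1 (horn_of_grammar_models S epsP wne) hm).
    by apply/HP.
Qed.
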